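(* Let $T$ be a tree with $n\ge 2$ vertices, let $v$ be a vertex of $T$, and let $\ell$ be the length (number of edges) of the longest descending path in the rooted tree $T_v$. Then $$F(T)\leq \left[\sum_{k=0}^{\ell-1}\binom{n-2}{k}\right] F(T_v).$$ In particular, $F(T)\leq 2^{n-2}F(T_v)$.
   Context: For a finite undirected graph $G=(V,E)$, a shelling of $G$ is a total ordering $\sigma(1),\ldots,\sigma(|E|)$ of $E$ such that for every $k$ the edges $\sigma(1),\ldots,\sigma(k)$ form a connected subgraph; $F(G)$ is the number of shellings of $G$. For a vertex $v$ of a tree $T$, $T_v$ denotes $T$ rooted at $v$; a shelling of $T_v$ is a shelling $\sigma$ of $T$ whose first edge $\sigma(1)$ is incident to $v$, and $F(T_v)$ is the number of such shellings. In $T_v$, $u$ is the parent of $w$ (and $w$ a child of $u$) if $(u,w)$ is an edge and $u$ is closer to $v$ than $w$; a descending path from $u$ to $w$ is a path $u - v_1 - \cdots - v_r - w$ in which each vertex is the parent of the next. *)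

From mathcomp Require Import all_boot.
Set Implicit Arguments. Unset Strict Implicit. Unset Printing Implicit Defensive.

Section Graphs.
Variable V : finType.
Implicit Types (e : rel V) (S : seq {set V}).

Definition simple_graph e : Prop := symmetric e /\ irreflexive e.

Definition edges e : {set {set V}} :=
  [set E : {set V} | [exists x, [exists y, e x y && (E == [set x; y])]]].

(* a tree: connected and without cycles (a cycle = closed path with >= 3
   distinct vertices) *)
Definition is_tree e : Prop :=
  (forall x y, connect e x y) /\ (forall c : seq V, ~~ (ucycleb e c && (2 < size c))).

(* the subgraph formed by the edge list S (vertices = endpoints of edges of S)
   is connected: any two vertices covered by S are joined through edges of S *)
Definition edge_adj S : rel V := fun a b => has (fun E : {set V} => (a \in E) && (b \in E)) S.
Definition covered S : pred V := fun x => has (fun E : {set V} => x \in E) S.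
Definition connected_edges S : bool :=
  [forall x, [forall y, (covered S x && covered S y) ==> connect (edge_adj S) x y]].

Definition is_shelling e (t : seq {set V}) : bool :=
  perm_eq t (enum (edges e)) &&
  [forall k : 'I_(size t).+1, connected_edges (take k t)].

Definition F e : nat :=
  #|[pred t : (#|edges e|).-tuple {set V} | is_shelling e t]|.

(* F(T_v): number of shellings whose first edge is incident to v *)
Definition F_rooted e (v : V) : nat :=
  #|[pred t : (#|edges e|).-tuple {set V} | is_shelling e t && (v \in head set0 t)]|.

Definition dist e (x y : V) : nat :=
  find (fun k => [exists p : k.-tuple V, path e x p && (last x p == y)])
       (iota 0 #|V|).

Definition parent e (v u w : V) : bool := e u w && (dist e v u < dist e v w).

(* u :: p is a descending path in T_v; its length is size p *)
Definition descending e (v u : V) (p : seq V) : bool := path (parent e v) u p.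

Definition longest_desc e (v : V) (l : nat) : Prop :=
  (exists u p, descending e v u p /\ size p = l) /\
  (forall u p, descending e v u p -> size p <= l).

End Graphs.

(* Let [e_p] be the first edge of a shelling containing [v], and [w] its other end. Unless
   [p = 0], [w] lies on an earlier edge, and the first edge containing [w] is again of this
   kind; walking back in this way ends at the first edge of the shelling and visits a path
   from [v], which is descending, so at most [l] edges are picked.  Listing the picked edges
   in reverse order followed by the other edges in their original order gives a shelling of
   [T_v], from which the original shelling is recovered by knowing which positions were
   picked: the first one and fewer than [l] of the remaining [|E| - 1 <= n - 2] ones (every
   edge of a shelling of a tree after the first brings a new vertex). *)

From mathcomp Require Import all_boot.
From mathcomp Require Import zify.
Set Implicit Arguments. Unset Strict Implicit. Unset Printing Implicit Defensive.

Lemma find_iota_min (P : pred nat) n k : k < n -> P k -> (forall j, P j -> k <= j) ->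
  find P (iota 0 n) = k.
Proof.
move=> kn Pk kmin; have P_iota : has P (iota 0 n) by apply/hasP; exists k; rewrite ?mem_iota.
have fn : find P (iota 0 n) < n by rewrite -[n in _ < n](size_iota 0 n) -has_find.
apply/eqP; rewrite eqn_leq; apply/andP; split.
  by rewrite leqNgt; apply/negP => /(before_find 0); rewrite nth_iota // add0n Pk.
by apply: kmin; have := nth_find 0 P_iota; rewrite nth_iota // add0n.
Qed.

Lemma last_take_nth (T : Type) (x : T) s i : i <= size s -> last x (take i s) = nth x (x :: s) i.
Proof. by elim: s x i => [|a s IH] x [|i] //= hi; rewrite IH // (set_nth_default x a). Qed.

Section AcyclicPaths.
Variables (V : finType) (e : rel V).
Hypothesis e_sym : symmetric e.
Hypothesis e_acyclic : forall c : seq V, ~~ (ucycleb e c && (2 < size c)).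

(* The cycle: along [r] to its first vertex [z] on [s], then back to [x] along [s]. *)
Lemma acyclic_no_fork x r s : path e x r -> path e x s -> uniq (x :: r) -> uniq (x :: s) ->
  has (mem s) r -> head x r != head x s -> False.
Proof.
move=> pr ps ur us hs; move: pr ur.
case: (split_find hs) => z r1 r2 zs hr1 pr ur.
move: ps us hr1; case/splitPr: zs => s1 s2 ps us hr1 hd.
apply: (negP (e_acyclic (x :: rcons r1 z ++ rev s1))); apply/andP; split; last first.
  rewrite /= size_cat size_rcons size_rev.
  by case: r1 s1 hd {pr ur hr1 ps us} => [|? ?] [|? ?] //=; rewrite eqxx.
apply/andP; split.
  rewrite /= rcons_cat cat_path last_rcons.
  move: pr; rewrite cat_path => /andP[-> _] /=.
  have := rev_path e x (rcons s1 z).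
  rewrite last_rcons belast_rcons rev_cons => ->.
  rewrite (eq_path (e' := e)); last by move=> a b; rewrite e_sym.
  by move: ps; rewrite -cat_rcons cat_path => /andP[].
move: ur us hr1; rewrite /= !mem_cat !cat_uniq !mem_rcons !rcons_uniq !in_cons
  rev_uniq mem_rev !negb_or.
move=> /and4P[/andP[/andP[xz xr1] _] /andP[zr1 ur1] _ _].
move=> /and4P[/and3P[xs1 _ _] us1 /andP[zs1 _] _] /hasPn hr1.
rewrite xz xr1 xs1 ur1 us1 zr1 /= andbT.
apply/hasPn => y; rewrite mem_rev => ys1; rewrite mem_rcons in_cons negb_or.
apply/andP; split; first by apply: contraNneq zs1 => <-.
by apply/negP => /hr1; rewrite /= mem_cat ys1.
Qed.

Lemma acyclic_path_unique x p q : path e x p -> path e x q -> uniq (x :: p) ->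
  uniq (x :: q) -> last x p = last x q -> p = q.
Proof.
elim: p x q => [|a p IH] x [|b q] //=.
- by move=> _ _ _ /andP[xq _] ex; move: xq; rewrite ex mem_last.
- by move=> _ _ /andP[xp _] _ ex; move: xp; rewrite -ex mem_last.
move=> /andP[xa pa] /andP[xb qb] /andP[xap up] /andP[xbq uq] hl.
have [eab|nab] := eqVneq a b; first by rewrite -eab in qb uq hl *; rewrite (IH a q).
have meet : has (mem (b :: q)) (a :: p).
  by apply/hasP; exists (last a p); [exact: mem_last | rewrite hl; exact: mem_last].
exfalso; apply: (@acyclic_no_fork x (a :: p) (b :: q) _ _ _ _ meet) => /=;
  by rewrite ?xa ?xb ?xap ?xbq.
Qed.

Lemma dist_uniq_path x ys : path e x ys -> uniq (x :: ys) -> dist e x (last x ys) = size ys.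
Proof.
move=> pys uys; apply: find_iota_min.
- by have := max_card (mem (x :: ys)); rewrite (card_uniqP _).
- by apply/existsP; exists (in_tuple ys); rewrite /= pys eqxx.
move=> j /existsP[p /andP[pp /eqP]]; case: (shortenP pp) => p' pp' up' sub lp.
rewrite -(acyclic_path_unique pp' pys up' uys lp) -(size_tuple p).
by apply: uniq_leq_size sub; case/andP: up'.
Qed.

Lemma uniq_path_descending x ys : path e x ys -> uniq (x :: ys) -> descending e x x ys.
Proof.
move=> pys uys; apply/(pathP x) => i hi; rewrite /parent (pathP x pys i hi) /=.
have dist_nth j : j <= size ys -> dist e x (nth x (x :: ys) j) = j.
  move=> hj; rewrite -last_take_nth // dist_uniq_path ?size_takel ?take_path //.
  by rewrite -/(take j.+1 (x :: ys)) take_uniq.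
by rewrite dist_nth ?(ltnW hi) // -[nth x ys i]/(nth x (x :: ys) i.+1) dist_nth.
Qed.

End AcyclicPaths.

Section ConnectedEdges.
Variable V : finType.
Implicit Types (S A B : seq {set V}).

Lemma connected_edgesP S : reflect
  (forall x y, covered S x -> covered S y -> connect (edge_adj S) x y) (connected_edges S).
Proof.
apply: (iffP forallP) => [h x y hx hy | h x]; last first.
  by apply/forallP => y; apply/implyP => /andP[]; apply: h.
by have /forallP/(_ y)/implyP := h x; apply; rewrite hx hy.
Qed.

Lemma eq_connected_edges A B : A =i B -> connected_edges A = connected_edges B.
Proof.
move=> eqAB; have adjE : edge_adj A =2 edge_adj B by move=> a b; apply: eq_has_r.
have covE : covered A =1 covered B by move=> a; apply: eq_has_r.
apply/connected_edgesP/connected_edgesP => h x y.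
  by rewrite -!covE -(eq_connect adjE); apply: h.
by rewrite !covE (eq_connect adjE); apply: h.
Qed.

Lemma connected_edges0 : @connected_edges V [::].
Proof. by apply/connected_edgesP. Qed.

Lemma connected_edges1 (E : {set V}) : connected_edges [:: E].
Proof.
apply/connected_edgesP => x y; rewrite /covered /= !orbF => hx hy.
by apply: connect1; rewrite /edge_adj /= hx hy.
Qed.

Lemma edge_adj_sym S : symmetric (edge_adj S).
Proof. by move=> x y; apply: eq_has => E; rewrite andbC. Qed.

Lemma connected_edges_cat A B z : connected_edges A -> connected_edges B ->
  covered A z -> covered B z -> connected_edges (A ++ B).
Proof.
move=> /connected_edgesP cA /connected_edgesP cB zA zB.
have sub_adj (C : seq {set V}) : subrel (edge_adj C) (edge_adj (A ++ B)) ->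
    forall a b, connect (edge_adj C) a b -> connect (edge_adj (A ++ B)) a b.
  by move=> sub a b; apply: connect_sub => c d /sub /connect1.
have from_z a : covered (A ++ B) a -> connect (edge_adj (A ++ B)) z a.
  rewrite /covered has_cat => /orP[aA|aB].
    by apply: sub_adj (cA _ _ zA aA) => c d; rewrite /edge_adj has_cat => ->.
  by apply: sub_adj (cB _ _ zB aB) => c d; rewrite /edge_adj has_cat => ->; rewrite orbT.
apply/connected_edgesP => x y hx hy; apply: connect_trans (from_z _ hy).
by rewrite (sym_connect_sym (@edge_adj_sym _)); apply: from_z.
Qed.

Definition path_edges (x : V) (p : seq V) : seq {set V} := pairmap (fun a b => [set a; b]) x p.

Lemma connected_path_edges x p k : connected_edges (take k (path_edges x p)).
Proof.
elim: p x k => [|y p IH] x [|k] /=; rewrite ?take0 ?connected_edges0 //.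
case: p k {IH} (IH y k) => [|z p] [|k] h; rewrite ?take0 /= ?connected_edges1 //.
rewrite -cat1s; apply: (connected_edges_cat (z := y) (connected_edges1 _) h).
  by rewrite /covered /= set22.
by rewrite /covered /= set21.
Qed.

End ConnectedEdges.

Section Reroot.
Variable T : Type.
Implicit Types (M : bitseq) (s : seq T).

Lemma mask_set_nth_rcons M s p x0 :
  p < size s -> size M = size s -> (forall i, p <= i -> nth false M i = false) ->
  mask (set_nth false M p true) s = rcons (mask M s) (nth x0 s p).
Proof.
elim: s M p => [|x s IH] [|b M] p //= hp [sizeM] Mp.
case: p hp Mp => [|p] hp Mp /=; last first.
  by rewrite IH // => [|i /(Mp i.+1)]; case: (b).
have -> : M = nseq (size M) false.
  apply: (@eq_from_nth _ false) => [|i _]; first by rewrite size_nseq.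
  by rewrite nth_nseq if_same; apply: (Mp i.+1).
by move: (Mp 0 isT) => /= ->; rewrite !mask_false.
Qed.

Definition reroot M s := rev (mask M s) ++ mask (map negb M) s.

Lemma reroot_inj M s1 s2 : size s1 = size M -> size s2 = size M ->
  reroot M s1 = reroot M s2 -> s1 = s2.
Proof.
move=> size1 size2 eq12.
have /(congr1 rev) : take (count id M) (reroot M s1) = take (count id M) (reroot M s2).
  by rewrite eq12.
rewrite !take_size_cat ?size_rev ?size_mask // !revK.
have : drop (count id M) (reroot M s1) = drop (count id M) (reroot M s2) by rewrite eq12.
rewrite !drop_size_cat ?size_rev ?size_mask //.
elim: M s1 s2 size1 size2 {eq12} => [|b M IH] [|x1 s1] [|x2 s2] //= [] /IH {}IH [] /IH {}IH.
by case: b => /= [eqN [-> eq]|[-> eqN] eq]; rewrite (IH eqN eq).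
Qed.

End Reroot.

Lemma perm_reroot (T : eqType) (M : bitseq) (s : seq T) :
  size M = size s -> perm_eq (reroot M s) s.
Proof.
move=> sizeM; apply: (@perm_trans _ (mask M s ++ mask (map negb M) s)).
  by rewrite perm_cat2r perm_rev.
elim: s M sizeM => [|x s IH] [|b M] //= [/IH]; case: b => /= h; first by rewrite perm_cons.
by rewrite -cat1s perm_catCA perm_cons.
Qed.

Lemma take_mask_negb_prefix (T : eqType) (M : bitseq) (s : seq T) j :
  size M = size s -> exists q,
  {subset take j (mask (map negb M) s) <= take q s} /\
  {subset take q s <= mask M s ++ take j (mask (map negb M) s)}.
Proof.
elim: s M j => [|x s IH] [|b M] j //= [sizeM].
case: j => [|j]; first by exists 0; split => y; rewrite take0.
have [q [sub1 sub2]] := IH M (if b then j.+1 else j) sizeM.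
exists q.+1; case: b {IH} sub1 sub2 => /= sub1 sub2; split => y.
- by move=> /sub1; rewrite in_cons orbC => ->.
- by rewrite !in_cons => /orP[->|/sub2 ->]; rewrite ?orbT.
- by rewrite !in_cons => /orP[->|/sub1 ->]; rewrite ?orbT.
- rewrite mem_cat !in_cons => /orP[->|/sub2]; rewrite ?orbT // mem_cat.
  by case/orP=> ->; rewrite ?orbT.
Qed.

Section Shellings.
Variables (V : finType) (e : rel V).

Lemma mem_edges E : reflect (exists x y, e x y /\ E = [set x; y]) (E \in edges e).
Proof.
rewrite inE; apply: (iffP existsP) => [[x /existsP[y /andP[exy /eqP ->]]]|[x [y [exy ->]]]].
  by exists x, y.
by exists x; apply/existsP; exists y; rewrite exy eqxx.
Qed.

Variable t : seq {set V}.
Hypothesis t_shelling : is_shelling e t.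

Lemma mem_shelling E : (E \in t) = (E \in edges e).
Proof. by case/andP: t_shelling => /perm_mem -> _; rewrite mem_enum. Qed.

Lemma shelling_uniq : uniq t.
Proof. by case/andP: t_shelling => /perm_uniq ->; rewrite enum_uniq. Qed.

Lemma size_shelling : size t = #|edges e|.
Proof. by case/andP: t_shelling => /perm_size ->; rewrite cardE. Qed.

Lemma shelling_take_connected k : connected_edges (take k t).
Proof.
case/andP: t_shelling => _ /forallP conn; have [kt|tk] := leqP k (size t).
  exact: (conn (Ordinal (kt : k < (size t).+1))).
by rewrite take_oversize ?(ltnW tk) // -{1}(take_size t); apply: (conn ord_max).
Qed.

End Shellings.

Section ConnectedPrefixes.
Variables (V : finType) (e : rel V).
Hypothesis e_sym : symmetric e.
Hypothesis e_irr : irreflexive e.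
Variable s : seq {set V}.
Hypothesis s_conn : forall k, connected_edges (take k s).
Hypothesis s_edges : {subset s <= edges e}.

Lemma covered_take_leq i j z : i <= j -> covered (take i s) z -> covered (take j s) z.
Proof.
by move=> ij; rewrite -(take_takel s ij) /covered -{2}(cat_take_drop i (take j s)) has_cat => ->.
Qed.

Lemma covered_take_nth p z : p < size s -> z \in nth set0 s p -> covered (take p.+1 s) z.
Proof. by move=> ps zp; rewrite (take_nth set0 ps) /covered has_rcons zp. Qed.

Lemma edge_other_end E u : E \in s -> u \in E -> exists2 w, e u w & E = [set u; w].
Proof.
move=> /s_edges/mem_edges[x [y [exy ->]]] /set2P[->|->]; first by exists y.
by exists x; rewrite 1?e_sym // setUC.
Qed.

(* Otherwise, in the connected prefix [take p.+1 s], no edge would join edge [p] to edge [0]. *)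
Lemma fresh_edge_other_end_covered p u w : 0 < p -> p < size s ->
  nth set0 s p = [set u; w] -> ~~ covered (take p s) u -> covered (take p s) w.
Proof.
move=> p_gt0 ps Ep u_new; apply: contraT => w_new.
have /connected_edgesP conn := s_conn p.+1; rewrite (take_nth set0 ps) in conn.
have E0 : nth set0 s 0 \in take p s.
  by rewrite -(nth_take set0 p_gt0) mem_nth // size_takel // ltnW.
have /s_edges/mem_edges[a [b [_ E0_eq]]] := mem_take E0.
have a_old : covered (take p s) a by apply/hasP; exists (nth set0 s 0); rewrite // E0_eq set21.
have notin_Ep z : covered (take p s) z -> z \notin nth set0 s p.
  by move=> z_old; rewrite Ep; apply/set2P => -[] zE; rewrite -zE z_old in u_new w_new.
have Ep_closed : closed (edge_adj (rcons (take p s) (nth set0 s p))) (mem (nth set0 s p)).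
  move=> z1 z2; rewrite /edge_adj has_rcons.
  case/orP=> [/andP[-> ->] //|/hasP[F F_old /andP[z1F z2F]]].
  by rewrite !(negbTE (notin_Ep _ _)) //; apply/hasP; exists F.
have u_cov : covered (rcons (take p s) (nth set0 s p)) u.
  by rewrite /covered has_rcons Ep set21.
have a_cov : covered (rcons (take p s) (nth set0 s p)) a.
  by rewrite /covered has_rcons; apply/orP; right.
have := closed_connect Ep_closed (conn u a u_cov a_cov).
by rewrite (negbTE (notin_Ep a a_old)) Ep set21.
Qed.

(* [M] marks the positions in [s] of the edges of the path [u :: ys]; they occur in [s] in
   reverse order, the first one at position [p] and the last one at position [0]. *)
Record back_chain (p : nat) (u : V) (M : bitseq) (ys : seq V) : Prop := BackChain {
  back_chain_size : size M = size s;
  back_chain_first : nth false M 0;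
  back_chain_bound : forall i, p < i -> nth false M i = false;
  back_chain_path : path e u ys;
  back_chain_uniq : uniq (u :: ys);
  back_chain_covered : all (covered (take p.+1 s)) (u :: ys);
  back_chain_edges : rev (mask M s) = path_edges u ys }.

Lemma back_chain0 u : 0 < size s -> u \in nth set0 s 0 ->
  exists M ys, back_chain 0 u M ys.
Proof.
move=> s_gt0 u_in; have [w euw E0] := edge_other_end (mem_nth set0 s_gt0) u_in.
have uw : u != w by apply: contraTneq euw => ->; rewrite e_irr.
exists (set_nth false (nseq (size s) false) 0 true), [:: w].
have mask0 : mask (set_nth false (nseq (size s) false) 0 true) s = [:: nth set0 s 0].
  rewrite (mask_set_nth_rcons set0 s_gt0) ?size_nseq // => [|i _].
    by rewrite mask_false.
  by rewrite nth_nseq if_same.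
split => //=.
- by rewrite size_set_nth size_nseq; apply/maxn_idPr.
- by rewrite nth_set_nth.
- by move=> i i_gt0; rewrite nth_set_nth /= gtn_eqF // nth_nseq if_same.
- by rewrite euw.
- by rewrite inE uw.
- by rewrite !covered_take_nth // E0 ?set21 ?set22.
- by rewrite mask0 E0.
Qed.

Lemma back_chain_cons p q u w M ys : q < p -> p < size s ->
  nth set0 s p = [set u; w] -> e u w -> ~~ covered (take p s) u ->
  back_chain q w M ys -> back_chain p u (set_nth false M p true) (w :: ys).
Proof.
move=> qp ps Ep euw u_new [sizeM M0 Mq pys uys ys_cov edgesM].
have uw : u != w by apply: contraTneq euw => ->; rewrite e_irr.
have ys_old : all (covered (take p s)) (w :: ys).
  by apply: sub_all ys_cov => z; apply: covered_take_leq.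
have u_ys : u \notin w :: ys by apply: contra u_new => /(allP ys_old).
have maskM : mask (set_nth false M p true) s = rcons (mask M s) (nth set0 s p).
  by apply: (mask_set_nth_rcons set0) => // i pi; apply: Mq; apply: leq_trans pi.
split => /=.
- by rewrite size_set_nth sizeM; apply/maxn_idPr.
- by rewrite nth_set_nth /= eq_sym (gtn_eqF (leq_ltn_trans (leq0n q) qp)).
- by move=> i pi; rewrite nth_set_nth /= (gtn_eqF pi) Mq // (ltn_trans qp).
- by rewrite euw.
- by rewrite u_ys.
- rewrite covered_take_nth ?Ep ?set21 //=; apply: sub_all ys_old => z.
  exact: covered_take_leq.
- by rewrite maskM rev_rcons edgesM Ep.
Qed.

Lemma back_chain_exists p u : p < size s -> u \in nth set0 s p -> ~~ covered (take p s) u ->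
  exists M ys, back_chain p u M ys.
Proof.
elim/ltn_ind: p u => -[|p] IH u ps u_in u_new; first exact: back_chain0.
have [w euw Ep] := edge_other_end (mem_nth set0 ps) u_in.
have w_old := fresh_edge_other_end_covered (ltn0Sn p) ps Ep u_new.
have qp : find (fun F : {set V} => w \in F) s < p.+1 := find_ltn w_old.
have w_s : has (fun F : {set V} => w \in F) s.
  by rewrite -(cat_take_drop p.+1 s) has_cat; apply/orP; left.
have w_in := nth_find set0 w_s.
have w_new : ~~ covered (take (find (fun F : {set V} => w \in F) s) s) w.
  by rewrite /covered has_take // ltnn.
have [M [ys chain]] := IH _ qp w (ltn_trans qp ps) w_in w_new.
by exists (set_nth false M p.+1 true), (w :: ys); apply: back_chain_cons chain.
Qed.

Lemma edge_adj_path (A : seq {set V}) x q : {subset A <= edges e} ->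
  path (edge_adj A) x q -> uniq (x :: q) -> path e x q.
Proof.
move=> A_edges; elim: q x => [|a q IH] x //= /andP[xa pq] /andP[xaq uq].
rewrite IH // andbT; have : x != a by apply: contraNneq xaq => ->; rewrite mem_head.
case/hasP: xa => F /A_edges/mem_edges[c [d [ecd ->]]] /andP[/set2P[]-> /set2P[]->];
  by rewrite ?eqxx // e_sym.
Qed.

Hypothesis e_acyclic : forall c : seq V, ~~ (ucycleb e c && (2 < size c)).
Hypothesis s_uniq : uniq s.

(* Were both ends of edge [p] covered earlier, the tree path between them inside the
   earlier edges would be that very edge. *)
Lemma fresh_vertex_exists p : p < size s ->
  exists2 z, z \in nth set0 s p & ~~ covered (take p s) z.
Proof.
move=> ps; have /s_edges/mem_edges[x [y [exy Ep]]] := mem_nth set0 ps.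
have [x_old|] := boolP (covered (take p s) x); last by exists x; rewrite // Ep set21.
have [y_old|] := boolP (covered (take p s) y); last by exists y; rewrite // Ep set22.
have xy : x != y by apply: contraTneq exy => ->; rewrite e_irr.
have take_edges : {subset take p s <= edges e} by move=> E /mem_take/s_edges.
case/connectP: (connected_edgesP _ (s_conn p) x y x_old y_old) => q pq.
case: (shortenP pq) => q' pq' uq' _ /esym ly.
have exy' : path e x [:: y] by rewrite /= exy.
have uxy : uniq [:: x; y] by rewrite /= inE xy.
have q'y := acyclic_path_unique e_sym e_acyclic (edge_adj_path take_edges pq' uq')
  exy' uq' uxy ly.
move: pq'; rewrite q'y /= andbT => /hasP[F F_old /andP[xF yF]].
have /take_edges/mem_edges[c [d [_ Fcd]]] := F_old.
have FEp : F = nth set0 s p.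
  rewrite Ep Fcd; move: xF yF xy; rewrite Fcd => /set2P[]-> /set2P[]->; rewrite ?eqxx // => _.
  exact: setUC.
by move: F_old; rewrite FEp in_take ?mem_nth // (index_uniq set0 ps s_uniq) ltnn.
Qed.

Lemma card_covered_take k : k < size s -> k.+2 <= #|[set z | covered (take k.+1 s) z]|.
Proof.
elim: k => [s_gt0|k IH ks].
  have /s_edges/mem_edges[x [y [exy E0]]] := mem_nth set0 s_gt0.
  have -> : [set z | covered (take 1 s) z] = nth set0 s 0.
    by apply/setP => z; rewrite inE (take_nth set0 s_gt0) /covered take0 /= orbF.
  by rewrite E0 cards2 ltnS lt0b; apply: contraTneq exy => ->; rewrite e_irr.
apply: leq_ltn_trans (IH (ltnW ks)) _; apply: proper_card; apply/properP; split.
  by apply/subsetP => z; rewrite !inE; apply: covered_take_leq.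
have [z z_in z_new] := fresh_vertex_exists ks.
by exists z; rewrite inE // covered_take_nth.
Qed.

Lemma size_lt_card : 0 < size s -> size s < #|V|.
Proof.
move=> s_gt0; rewrite -(prednK s_gt0); apply: leq_trans (max_card _).
by apply: card_covered_take; rewrite prednK.
Qed.

End ConnectedPrefixes.

Lemma mem_mask_head (T : eqType) (M : bitseq) (t : seq T) x0 :
  size M = size t -> nth false M 0 -> nth x0 t 0 \in mask M t.
Proof. by case: M => [|b M]; case: t => [|x t] //= _ ->; rewrite mem_head. Qed.

Section RerootShelling.
Variables (V : finType) (e : rel V).
Variables (t : seq {set V}) (M : bitseq) (v : V) (ys : seq V).
Hypothesis t_shelling : is_shelling e t.
Hypothesis sizeM : size M = size t.
Hypothesis M0 : nth false M 0.
Hypothesis maskM : rev (mask M t) = path_edges v ys.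

(* Beyond the reversed chain, the prefixes of [reroot M t] cover, up to order, a prefix
   of [t]; the chain meets it in the edge [nth set0 t 0]. *)
Lemma reroot_take_connected k : connected_edges (take k (reroot M t)).
Proof.
rewrite /reroot take_cat size_rev maskM; case: ifP => _; first exact: connected_path_edges.
set j := k - _; have [q [sub1 sub2]] := take_mask_negb_prefix j sizeM.
rewrite (@eq_connected_edges _ _ (path_edges v ys ++ take q t)); last first.
  move=> E; rewrite !mem_cat -maskM mem_rev; apply/idP/idP => /orP[-> //|E_in].
    by rewrite (sub1 _ E_in) orbT.
  by have := sub2 _ E_in; rewrite mem_cat.
have chain_conn := connected_path_edges v ys (size (path_edges v ys)).
rewrite take_size in chain_conn.
case: q {sub1 sub2} => [|q]; first by rewrite take0 cats0.
have t_gt0 : 0 < size t by rewrite -sizeM; case: (M) M0.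
have /(mem_edges e)[a [b [_ E0]]] : nth set0 t 0 \in edges e.
  by rewrite -(mem_shelling t_shelling) mem_nth.
apply: (connected_edges_cat (z := a) chain_conn (shelling_take_connected t_shelling _)).
  by apply/hasP; exists (nth set0 t 0); rewrite -?maskM ?mem_rev ?mem_mask_head // E0 set21.
apply/hasP; exists (nth set0 t 0); last by rewrite E0 set21.
by rewrite -(nth_take set0 (ltn0Sn q)) mem_nth // size_take; case: ifP.
Qed.

Lemma reroot_shelling : is_shelling e (reroot M t) && (v \in head set0 (reroot M t)).
Proof.
have /andP[t_perm _] := t_shelling.
apply/andP; split.
  apply/andP; split; first exact: perm_trans (perm_reroot sizeM) t_perm.
  by apply/forallP => k; apply: reroot_take_connected.
have : nth set0 t 0 \in rev (mask M t) by rewrite mem_rev mem_mask_head.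
by rewrite /reroot maskM; case: (ys) => [|y ys'] //= _; rewrite set21.
Qed.

End RerootShelling.

Lemma card_le_mul_cover (T U W : finType) (A : {pred T}) (B : {pred U}) (C : {pred W})
    (h : W -> T -> U) :
  (forall c, injective (h c)) -> {in A, forall x, exists2 c, c \in C & h c x \in B} ->
  #|A| <= #|C| * #|B|.
Proof.
move=> h_inj cover; rewrite -sum1_card -sum_nat_const.
apply: (@leq_trans (\sum_(x in A) \sum_(c in C) (h c x \in B))).
  by apply: leq_sum => x /cover[c cC hxB]; rewrite (bigD1 c) //= hxB.
rewrite exchange_big; apply: leq_sum => c _.
apply: (@leq_trans (\sum_(x | h c x \in B) 1)).
  rewrite big_mkcond [X in _ <= X]big_mkcond; apply: leq_sum => x _.
  by case: (x \in A); case: (h c x \in B).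
rewrite sum1dep_card -(card_imset _ (h_inj c)).
by apply/subset_leq_card/subsetP => y /imsetP[x]; rewrite inE => hxB ->.
Qed.

Lemma card_small_sets (T : finType) l :
  #|[set S : {set T} | #|S| < l]| = \sum_(k < l) 'C(#|T|, k).
Proof.
elim: l => [|l IH].
  by rewrite big_ord0; apply/eqP; rewrite cards_eq0 -subset0; apply/subsetP.
rewrite big_ord_recr /= -IH -card_draws -!sum1dep_card.
rewrite (bigID (fun S : {set T} => #|S| == l)) addnC.
by congr (_ + _); apply: eq_bigl => S; rewrite ltnS; case: ltngtP.
Qed.

Lemma sum_binomial_lt_exp m l : \sum_(k < l) 'C(m, k) <= 2 ^ m.
Proof.
have := card_small_sets 'I_m l; rewrite card_ord => <-.
rewrite -[m in 2 ^ m]card_ord -cardsT -card_powerset.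
by apply/subset_leq_card/subsetP => S _; rewrite powersetE subsetT.
Qed.

Lemma card_set_nth m (b : bitseq) : size b <= m ->
  #|[set i : 'I_m | nth false b i]| = count id b.
Proof.
rewrite -sum1dep_card big_mkcond /=.
elim: b m => [|x b IH] m b_le; first by rewrite big1 // => i _; rewrite nth_nil.
by case: m b_le => [|m] //= b_le; rewrite big_ord_recl /= IH.
Qed.

Definition bits_of_set n (S : {set 'I_n}) : bitseq := true :: [seq i \in S | i <- enum 'I_n].

Lemma bits_of_set_onto n (M : bitseq) : size M = n.+1 -> nth false M 0 ->
  exists2 S : {set 'I_n}, bits_of_set S = M & #|S|.+1 = count id M.
Proof.
case: M => [|b M] //= [sizeM] ->; exists [set i : 'I_n | nth false M i].
  congr (_ :: _); apply: (@eq_from_nth _ false); rewrite size_map size_enum_ord // => i i_lt.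
  by rewrite (nth_map (Ordinal i_lt)) ?size_enum_ord // inE nth_enum_ord.
by rewrite card_set_nth ?sizeM.
Qed.

Section RootedShellings.
Variables (V : finType) (e : rel V) (v : V) (l : nat).
Hypothesis e_sym : symmetric e.
Hypothesis e_irr : irreflexive e.
Hypothesis e_conn : forall x y, connect e x y.
Hypothesis e_acyclic : forall c : seq V, ~~ (ucycleb e c && (2 < size c)).
Hypothesis V_ge2 : 2 <= #|V|.
Hypothesis l_longest : longest_desc e v l.

Lemma root_edge : exists w, e v w.
Proof.
have /card_gt0P[y] : 0 < #|predC1 v| by rewrite cardC1; lia.
rewrite !inE => yv; case/connectP: (e_conn v y) => -[|w p] /=.
  by move=> _ yv'; rewrite yv' eqxx in yv.
by case/andP => evw _ _; exists w.
Qed.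

Lemma rooting_mask_exists t : is_shelling e t -> exists M, [/\ size M = size t, nth false M 0,
  count id M <= l & is_shelling e (reroot M t) && (v \in head set0 (reroot M t))].
Proof.
move=> t_shelling; have [w evw] := root_edge.
have v_t : has (fun E : {set V} => v \in E) t.
  apply/hasP; exists [set v; w]; rewrite ?set21 // (mem_shelling t_shelling).
  by apply/mem_edges; exists v, w.
have t_edges : {subset t <= edges e} by move=> E; rewrite (mem_shelling t_shelling).
have v_new : ~~ covered (take (find (fun E : {set V} => v \in E) t) t) v.
  by rewrite /covered has_take // ltnn.
have p_lt : find (fun E : {set V} => v \in E) t < size t by rewrite -has_find.
have [M [ys [sizeM M0 _ ys_path ys_uniq _ maskM]]] := back_chain_exists e_sym e_irr
  (shelling_take_connected t_shelling) t_edges p_lt (nth_find set0 v_t) v_new.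
exists M; split => //; last exact: reroot_shelling t_shelling sizeM M0 maskM.
rewrite -(size_mask sizeM) -size_rev maskM size_pairmap.
exact: l_longest.2 _ _ (uniq_path_descending e_sym e_acyclic ys_path ys_uniq).
Qed.

Lemma edges_gt0 : 0 < #|edges e|.
Proof.
have [w evw] := root_edge.
by apply/card_gt0P; exists [set v; w]; apply/mem_edges; exists v, w.
Qed.

Lemma edges_lt_card : 0 < F e -> #|edges e| < #|V|.
Proof.
case/card_gt0P => t /= t_shelling; have t_edges : {subset t <= edges e}.
  by move=> E; rewrite (mem_shelling t_shelling).
rewrite -(size_shelling t_shelling).
apply: (size_lt_card e_sym e_irr (shelling_take_connected t_shelling) t_edges e_acyclic).
  exact: shelling_uniq t_shelling.
by rewrite (size_shelling t_shelling) edges_gt0.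
Qed.

Lemma F_le_sum_binomial : F e <= (\sum_(k < l) 'C(#|edges e|.-1, k)) * F_rooted e v.
Proof.
set N := #|edges e|; have N_eq : N.-1.+1 = N := prednK edges_gt0.
have size_bits (S : {set 'I_N.-1}) : size (bits_of_set S) = N.
  by rewrite /= size_map size_enum_ord N_eq.
pose h (S : {set 'I_N.-1}) (t : N.-tuple {set V}) := insubd t (reroot (bits_of_set S) t).
have hE S t : h S t = reroot (bits_of_set S) t :> seq {set V}.
  by rewrite [LHS]val_insubd (perm_size (perm_reroot _)) (size_tuple t) ?eqxx ?size_bits.
have := card_small_sets 'I_N.-1 l; rewrite card_ord => <-.
apply: (@card_le_mul_cover _ _ _ _ _ _ h) => [S t1 t2 /(congr1 (@tval _ _))|t t_shelling].
  by rewrite !hE => /reroot_inj eq12; apply/val_inj/eq12; rewrite size_tuple size_bits.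
have [M [sizeM M0 countM rooted]] := rooting_mask_exists t_shelling.
have [|S SM cardS] := bits_of_set_onto (n := N.-1) _ M0; first by rewrite sizeM size_tuple.
exists S; first by rewrite inE -ltnS cardS ltnS.
by rewrite inE /= hE SM.
Qed.

End RootedShellings.

Theorem lemma3p11 (V : finType) (e : rel V) (v : V) (l : nat) :
  simple_graph e -> is_tree e -> 2 <= #|V| -> longest_desc e v l ->
  F e <= (\sum_(k < l) 'C(#|V| - 2, k)) * F_rooted e v /\
  F e <= 2 ^ (#|V| - 2) * F_rooted e v.
Proof.
move=> [e_sym e_irr] [e_conn e_acyclic] V_ge2 l_longest.
have [F0|F_gt0] := posnP (F e); first by rewrite F0.
have F_le := F_le_sum_binomial e_sym e_irr e_conn e_acyclic V_ge2 l_longest.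
have edges_le : #|edges e|.-1 <= #|V| - 2.
  by have := edges_lt_card v e_sym e_irr e_conn e_acyclic V_ge2 F_gt0; lia.
have sum_le : \sum_(k < l) 'C(#|edges e|.-1, k) <= \sum_(k < l) 'C(#|V| - 2, k).
  by apply: leq_sum => k _; apply: leq_bin2l.
split; apply: (leq_trans F_le); rewrite leq_mul2r ?sum_le ?orbT //.
by rewrite (leq_trans sum_le) ?orbT // sum_binomial_lt_exp.
Qed.
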